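(* Let $H$ be a $p$-variate cumulative distribution function with continuous margins $F_1,\ldots,F_p$, let $\hat H_n$ be random $p$-variate cumulative distribution functions and $\hat F_{n,1},\ldots,\hat F_{n,p}$ random univariate cumulative distribution functions, and suppose there exists $0<r_n\to\infty$ such that, in $\ell^\infty(\mathbb R^p)\times\ell^\infty(\mathbb R)\times\cdots\times\ell^\infty(\mathbb R)$ with the topology of uniform convergence, \[\bigl(r_n(\hat H_n-H);\,r_n(\hat F_{n,1}-F_1),\ldots,r_n(\hat F_{n,p}-F_p)\bigr)\rightsquigarrow(\alpha\circ\mathbf F;\,\beta_1\circ F_1,\ldots,\beta_p\circ F_p),\qquad n\to\infty,\] where $\alpha$ is a random element of $\ell^\infty([0,1]^p)$ and $\beta_j$ random elements of $\ell^\infty([0,1])$ such that $\alpha\circ\mathbf F$ and $\beta_j\circ F_j$ have continuous trajectories on $[-\infty,\infty]^p$ and $[-\infty,\infty]$, respectively, almost surely. Then, with probability one, the trajectories of $\alpha$ and $\beta_1,\ldots,\beta_p$ are continuous (on $[0,1]^p$ and $[0,1]$ respectively).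
   Context: $\mathbf F(\mathbf x)=(F_1(x_1),\ldots,F_p(x_p))$, with $F_j(-\infty)=0$, $F_j(+\infty)=1$. $\ell^\infty(T)$ is the space of bounded real functions on $T$ with the supremum norm; $\rightsquigarrow$ denotes Hoffmann-Jørgensen weak convergence. *)

From HB Require Import structures.
From mathcomp Require Import all_boot all_order all_algebra.
From mathcomp Require Import all_classical all_reals all_analysis.
Unset Printing Implicit Defensive.
Import Order.TTheory GRing.Theory Num.Theory.
Import numFieldNormedType.Exports.
Local Open Scope classical_set_scope.
Local Open Scope ring_scope.

Definition orthant {R : realType} {p : nat} (a : 'I_p -> R) : set ('I_p -> R) :=
  [set x | forall j, x j <= a j].

(* R^p with its Borel sigma-algebra, presented as the sigma-algebra generated
   by the lower orthants (which generate the Borel sets of R^p) *)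
Definition orthants (R : realType) (p : nat) : set (set ('I_p -> R)) :=
  [set orthant a | a in [set: 'I_p -> R]].
Definition Rp (R : realType) (p : nat) := g_sigma_algebraType (orthants R p).

Definition is_cdf_p {R : realType} {p : nat} (H : ('I_p -> R) -> R) : Prop :=
  exists mu : probability (Rp R p) R, forall x, H x = fine (mu (orthant x)).

Definition is_cdf_p_margins {R : realType} {p : nat} (H : ('I_p -> R) -> R)
  (F : 'I_p -> R -> R) : Prop :=
  exists mu : probability (Rp R p) R,
    (forall x, H x = fine (mu (orthant x))) /\
    (forall j t, F j t = fine (mu [set y : 'I_p -> R | y j <= t])).

Definition is_cdf1 {R : realType} (F : R -> R) : Prop :=
  exists mu : probability R R, forall t, F t = fine (mu [set s : R | s <= t]).

Definition ext_cdf {R : realType} (F : R -> R) (x : \bar R) : R :=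
  match x with
  | EFin t => F t
  | +oo%E => 1
  | -oo%E => 0
  end.

Definition bounded_on {R : realType} {T : Type} (D : set T) (z : T -> R) : Prop :=
  exists M : R, forall x, D x -> `|z x| <= M.

Definition sup_close {R : realType} {T : Type} (D : set T) (z w : T -> R) (d : R) :=
  forall x, D x -> `|z x - w x| <= d.

Definition linf_open {R : realType} {T : Type} (D : set T) (A : set (T -> R)) :=
  forall z, A z -> bounded_on D z ->
    exists2 d : R, 0 < d & forall w, bounded_on D w -> sup_close D z w d -> A w.

Definition linf_borel {R : realType} {d} {Om : measurableType d} {T : Type}
  (D : set T) (X : Om -> T -> R) : Prop :=
  (forall w, bounded_on D (X w)) /\
  (forall A, linf_open D A -> measurable (X @^-1` A)).

Definition bcont_linf {R : realType} {T : Type} (f : (T -> R) -> R) : Prop :=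
  (exists M : R, forall z, bounded_on setT z -> `|f z| <= M) /\
  (forall z, bounded_on setT z -> forall e : R, 0 < e ->
     exists2 d : R, 0 < d & forall w, bounded_on setT w ->
       sup_close setT z w d -> `|f z - f w| < e).

(* outer expectation E^* X = inf { E U : U >= X, U measurable and integrable }
   (for bounded X, which is the only use below, this is the usual outer expectation) *)
Definition outer_expect {R : realType} {d} {Om : measurableType d}
  (P : probability Om R) (X : Om -> R) : \bar R :=
  ereal_inf [set (\int[P]_w (U w)%:E)%E | U in
    [set U : Om -> R | measurable_fun setT U /\ P.-integrable setT (EFin \o U)
                       /\ (forall w, X w <= U w)]].

(* Hoffmann-Jorgensen weak convergence X_n ~> X in l^infty(T):
   X is Borel measurable and E^* f(X_n) -> E f(X) for all bounded continuous f *)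
Definition hj_weak_cvg {R : realType} {T : Type}
  {dn : nat -> measure_display} {Omn : forall n, measurableType (dn n)}
  (Pn : forall n, probability (Omn n) R) (Xn : forall n, Omn n -> T -> R)
  {d} {Om : measurableType d} (P : probability Om R) (X : Om -> T -> R) : Prop :=
  linf_borel setT X /\
  (forall n w, bounded_on setT (Xn n w)) /\
  (forall f, bcont_linf f ->
     (fun n => outer_expect (Pn n) (fun w => f (Xn n w))) @ \oo
       --> (\int[P]_w (f (X w))%:E)%E).

(* the product l^infty(R^p) x l^infty(R) x ... x l^infty(R) (p factors),
   encoded as l^infty of the disjoint union R^p + {1..p} x R; the sup metric on
   the disjoint union is the max of the sup metrics, i.e. the product topology *)
Definition prodIdx (R : realType) (p : nat) := (('I_p -> R) + ('I_p * R))%type.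

Definition pack {R : realType} {p : nat} (h : ('I_p -> R) -> R)
  (g : 'I_p -> R -> R) : prodIdx R p -> R :=
  fun s => match s with inl x => h x | inr jt => g jt.1 jt.2 end.

Definition cube01 (R : realType) (p : nat) : set ('I_p -> R) :=
  [set x | forall j, 0 <= x j <= 1].
Definition unit01 (R : realType) : set R := [set t | 0 <= t <= 1].

(* Each margin F_j, extended by F_j(-oo) = 0 and F_j(+oo) = 1, is continuous on
   [-oo, +oo] and, by the intermediate value theorem, onto [0, 1].  Hence the
   coordinatewise map F sends the compact space [-oo, +oo]^p continuously onto
   [0, 1]^p, which is Hausdorff, so it is a quotient map onto its image:
   continuity of alpha o F forces continuity of alpha on [0, 1]^p, and likewise
   for each beta_j. *)

From HB Require Import structures.
From mathcomp Require Import all_boot all_order all_algebra.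
From mathcomp Require Import all_classical all_reals all_analysis.
From mathcomp Require Import lra.
Import Order.TTheory GRing.Theory Num.Theory.
Import numFieldNormedType.Exports.
Local Open Scope classical_set_scope.
Local Open Scope ring_scope.

Lemma ereal_compact (R : realType) : compact [set: \bar R].
Proof.
have -> : [set: \bar R] = @expand R @` `[-1, 1]%classic.
  apply/seteqP; split => y // _; exists (contract y); last exact: contractK.
  by rewrite /= in_itv /= -ler_norml contract_le1.
apply: continuous_compact; last exact: segment_compact.
rewrite continuous_subspace_in => x; rewrite inE /= in_itv /= => x1.
apply/cvg_ballP => e e0; apply/nbhs_subspace_ex; first by rewrite /= in_itv /= x1.
exists (ball x e); first exact: nbhsx_ballx.
have x1' : `|x| <= 1 by rewrite ler_norml.
apply/seteqP; split => t [tx t1]; split => //; move: tx;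
  rewrite /ball /= /ereal_ball !expandK ?inE //.
all: by move: t1; rewrite /= in_itv /= -ler_norml.
Qed.

Lemma ptws_ereal_compact (R : realType) (I : eqType) :
  compact [set: {ptws I -> \bar R}].
Proof.
have := @tychonoff I (fun=> \bar R) (fun=> setT) (fun=> ereal_compact R).
by congr compact; apply/seteqP.
Qed.

Lemma cvg_pointwise (I : Type) (V : topologicalType) (X : Type)
    (F : set_system X) {FF : Filter F} (g : X -> {ptws I -> V})
    (f : {ptws I -> V}) :
  (forall i, g x i @[x --> F] --> f i) -> g @ F --> f.
Proof.
move=> gf; apply/cvg_sup => i A /=; rewrite /nbhs /= => -[B [[U oU UB] Bfi BA]].
subst B.
have : F ((g ^~ i) @^-1` U) by apply: (gf i); exact: open_nbhs_nbhs.
by apply: filterS => x Ux; exact: BA.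
Qed.

Section coordinatewise_map.
Context {I : eqType} {T U : topologicalType} (phi : I -> T -> U).

Definition map_ptws (x : {ptws I -> T}) : {ptws I -> U} := fun i => phi i (x i).

Lemma continuous_map_ptws : (forall i, continuous (phi i)) -> continuous map_ptws.
Proof.
move=> phi_cont x; apply: (@cvg_pointwise I U _ (nbhs x) _ map_ptws) => i.
have proj_cvg : (fun y : {ptws I -> T} => y i) @ nbhs x --> x i.
  exact: (@proj_continuous I (fun=> T) i x).
exact: cvg_comp proj_cvg (phi_cont i (x i)).
Qed.

Lemma range_map_ptws (S : I -> set U) : (forall i, S i `<=` range (phi i)) ->
  [set y | forall i, S i (y i)] `<=` range map_ptws.
Proof.
move=> Sphi y Sy.
have preim i : exists x, phi i x = y i.
  by have [x _ <-] := Sphi i _ (Sy i); exists x.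
have [x xy] := choice preim.
by exists x => //; apply/funext => i; exact: xy.
Qed.

End coordinatewise_map.

Lemma continuous_within_factor_compact (K Y : topologicalType) (R : realFieldType)
    (G : K -> Y) (f : Y -> R) (S : set Y) :
  compact [set: K] -> hausdorff_space Y -> continuous G -> S `<=` range G ->
  continuous (f \o G) -> {within S, continuous f}.
Proof.
(* G maps the closed set where f o G is e-far from f u onto a compact, hence
   closed, set that misses u. *)
move=> cK hY cG SG cfG; rewrite continuous_subspace_in => u; rewrite inE => Su.
apply/cvgrPdist_lt => e e0.
pose far := [set x | e <= `|f u - f (G x)|].
have far_closed : closed far.
  have -> : far = (f \o G) @^-1` ~` ball (f u) e.
    by apply/seteqP; split => x; rewrite /far /= -ball_normE /= leNgt => /negP.
  apply: preimage_closed => [x _|]; first exact: cfG.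
  exact/open_closedC/ball_open.
have Gfar_closed : closed (G @` far).
  apply: compact_closed => //; apply: continuous_compact.
    exact: continuous_subspaceT.
  exact: subclosed_compact far_closed cK _.
have u_near : nbhs u (~` (G @` far)).
  apply: open_nbhs_nbhs; split; first exact: closed_openC.
  by move=> [x + Gxu]; rewrite /far /= Gxu subrr normr0 leNgt e0.
apply/nbhs_subspace_ex => //; exists (~` (G @` far)) => //.
apply/seteqP; split => v [fv Sv]; split => //.
  by move=> [x + Gxv]; rewrite /far /= Gxv leNgt fv.
have [x _ Gxv] := SG v Sv.
by rewrite /= ltNge; apply/negP => ufv; apply: fv; exists x; rewrite /far /= Gxv.
Qed.

Section orthant_margins.
Context {R : realType} {p : nat}.

Definition coord (j : 'I_p) (y : Rp R p) : R := y j.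

Lemma measurable_coord_le (j : 'I_p) (t : R) :
  measurable ([set y | y j <= t] : set (Rp R p)).
Proof.
have -> : [set y : Rp R p | y j <= t] =
    \bigcup_n orthant (fun i => if i == j then t else n%:R).
  apply/seteqP; split => y /=; last by move=> [n _ /(_ j)]; rewrite eqxx.
  move=> yt; exists (Num.truncn (\big[Order.max/0]_i `|y i|)).+1 => //= i.
  case: eqP => [->//|_]; apply/ltW/(le_lt_trans _ (truncnS_gt _)).
  exact: le_trans (ler_norm _) (le_bigmax _ (fun i => `|y i|) i).
apply: bigcupT_measurable => n; apply: sub_sigma_algebra.
by exists (fun i => if i == j then t else n%:R).
Qed.

Lemma measurable_coord (j : 'I_p) : measurable_fun setT (coord j).
Proof.
apply: (measurability _ (measurable_realfun.RGenOInfty.measurableE R)) => //.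
move=> _ [_ [x ->] <-]; rewrite setTI.
have -> : coord j @^-1` `]x, +oo[ = ~` [set y | y j <= x].
  by apply/seteqP; split => y; rewrite /= in_itv /= andbT ltNge => /negP.
by apply: measurableC; exact: measurable_coord_le.
Qed.

HB.instance Definition _ (j : 'I_p) :=
  isMeasurableFun.Build _ _ _ _ (coord j) (measurable_coord j).

Variable mu : probability (Rp R p) R.

Definition margin_cdf (j : 'I_p) (t : R) := fine (mu [set y | y j <= t]).

Lemma margin_cdfE (j : 'I_p) :
  margin_cdf j = fine \o cdf (coord j : {RV mu >-> R}).
Proof.
apply/funext => t; rewrite /margin_cdf /= /cdf /distribution /pushforward.
by congr (fine (mu _)); apply/seteqP; split => y; rewrite /= in_itv.
Qed.

Lemma cvgy_margin_cdf (j : 'I_p) : margin_cdf j @ +oo%R --> (1 : R).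
Proof.
have /fine_cvgP[_] := cvg_cdfy1 (coord j : {RV mu >-> R}).
by rewrite margin_cdfE.
Qed.

Lemma cvgNy_margin_cdf (j : 'I_p) : margin_cdf j @ -oo%R --> (0 : R).
Proof.
have /fine_cvgP[_] := cvg_cdfNy0 (coord j : {RV mu >-> R}).
by rewrite margin_cdfE.
Qed.

End orthant_margins.

Section extended_cdf.
Context {R : realType} {F : R -> R}.
Hypotheses (F_cont : continuous F) (F_cvgy : F @ +oo%R --> (1 : R))
  (F_cvgNy : F @ -oo%R --> (0 : R)).

Lemma continuous_ext_cdf : continuous (ext_cdf F : \bar R -> R).
Proof.
move=> x; apply/cvgrPdist_lt => e e0; case: x => [t| |].
- exact: (cvgrPdist_lt _ _).1 (F_cont t) e e0.
- have [M [Mr FM]] := (cvgrPdist_lt _ _).1 F_cvgy e e0.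
  exists M; split => // -[t /=| |_] //=; last by rewrite subrr normr0.
  by rewrite lte_fin; exact: FM.
- have [M [Mr FM]] := (cvgrPdist_lt _ _).1 F_cvgNy e e0.
  exists M; split => // -[t /=| _ |] //=; last by rewrite subrr normr0.
  by rewrite lte_fin; exact: FM.
Qed.

Lemma unit01_sub_range_ext_cdf : unit01 R `<=` range (ext_cdf F).
Proof.
move=> v /andP[v0 v1].
have [->|vn0] := eqVneq v 0; first by exists -oo%E.
have [->|vn1] := eqVneq v 1; first by exists +oo%E.
have v_gt0 : 0 < v by rewrite lt_neqAle eq_sym vn0.
have v_lt1 : 0 < 1 - v by rewrite subr_gt0 lt_neqAle vn1.
have [b Fb] : exists b, v < F b.
  have [M [_ FM]] := (cvgrPdist_lt _ _).1 F_cvgy (1 - v) v_lt1.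
  exists (M + 1); have := FM (M + 1); rewrite ltrDl ltr01.
  by move=> /(_ isT) /(le_lt_trans (ler_norm _)); lra.
have [a Fa] : exists a, F a < v.
  have [M [_ FM]] := (cvgrPdist_lt _ _).1 F_cvgNy v v_gt0.
  exists (M - 1); have := FM (M - 1); rewrite gtrBl ltr01 sub0r normrN.
  by move=> /(_ isT) /(le_lt_trans (ler_norm _)); lra.
have Fab x y : {within `[x, y], continuous F} by exact: continuous_subspaceT.
have [ab|ba] := leP a b.
- have : Num.min (F a) (F b) <= v <= Num.max (F a) (F b).
    by rewrite ge_min le_max (ltW Fa) (ltW Fb) orbT.
  by move=> /(IVT ab (Fab a b)) [c _ Fc]; exists c%:E.
- have : Num.min (F b) (F a) <= v <= Num.max (F b) (F a).
    by rewrite ge_min le_max (ltW Fa) (ltW Fb) orbT.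
  by move=> /(IVT (ltW ba) (Fab b a)) [c _ Fc]; exists c%:E.
Qed.

End extended_cdf.

Theorem lemma4p2 (R : realType) (p : nat)
  (H : ('I_p -> R) -> R) (F : 'I_p -> R -> R)
  (dn : nat -> measure_display) (Omn : forall n, measurableType (dn n))
  (Pn : forall n, probability (Omn n) R)
  (Hhat : forall n, Omn n -> ('I_p -> R) -> R)
  (Fhat : forall n, Omn n -> 'I_p -> R -> R)
  (r : nat -> R)
  (d : measure_display) (Om : measurableType d) (P : probability Om R)
  (alpha : Om -> ('I_p -> R) -> R) (beta : Om -> 'I_p -> R -> R) :
  is_cdf_p_margins H F ->
  (forall j, continuous (F j)) ->
  (forall n w, is_cdf_p (Hhat n w)) ->
  (forall n w j, is_cdf1 (Fhat n w j)) ->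
  (forall n, 0 < r n) ->
  r @ \oo --> +oo ->
  linf_borel (cube01 R p) alpha ->
  (forall j, linf_borel (unit01 R) (fun w => beta w j)) ->
  hj_weak_cvg Pn
    (fun n w => pack (fun x => r n * (Hhat n w x - H x))
                     (fun j t => r n * (Fhat n w j t - F j t)))
    P
    (fun w => pack (fun x => alpha w (fun j => F j (x j)))
                   (fun j t => beta w j (F j t))) ->
  {ae P, forall w,
     continuous (fun x : {ptws 'I_p -> \bar R} => alpha w (fun j => ext_cdf (F j) (x j)))
     /\ forall j, continuous (fun t : \bar R => beta w j (ext_cdf (F j) t))} ->
  {ae P, forall w,
     {within (cube01 R p : set {ptws 'I_p -> R}),
        continuous (alpha w : {ptws 'I_p -> R} -> R)} /\
     forall j, {within unit01 R, continuous (beta w j)}}.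
Proof.
move=> [mu [_ FE]] F_cont _ _ _ _ _ _ _.
have F_margin j : F j = margin_cdf mu j by apply/funext => t; exact: FE.
have F_cvgy j : F j @ +oo%R --> (1 : R) by rewrite F_margin; exact: cvgy_margin_cdf.
have F_cvgNy j : F j @ -oo%R --> (0 : R) by rewrite F_margin; exact: cvgNy_margin_cdf.
have ext_cont j := continuous_ext_cdf (F_cont j) (F_cvgy j) (F_cvgNy j).
have ext_onto j := unit01_sub_range_ext_cdf (F_cont j) (F_cvgy j) (F_cvgNy j).
pose G := map_ptws (fun j => ext_cdf (F j)).
have G_cont : continuous G := continuous_map_ptws _ ext_cont.
have G_onto : cube01 R p `<=` range G := range_map_ptws _ (fun=> unit01 R) ext_onto.
apply: filterS => w [alpha_cont beta_cont]; split => [|j].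
- apply: continuous_within_factor_compact (ptws_ereal_compact R _) _
    G_cont G_onto alpha_cont.
  by apply: hausdorff_product => _; exact: Rhausdorff.
- exact: continuous_within_factor_compact (ereal_compact R) (@Rhausdorff R)
    (ext_cont j) (ext_onto j) (beta_cont j).
Qed.
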